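(* For arbitrary nonnegative rates $p_1,\dots,p_n,q_1,\dots,q_n$, the Markov chain on $\Omega_{L,n}$ lumps to the one-dimensional ASEP on $\Psi_{L,n}$ via the map $\Pi$: for every $\omega\in\Omega_{L,n}$ and every $\psi\in\Psi_{L,n}$ with $\psi\neq\Pi(\omega)$, the sum of the transition rates from $\omega$ to configurations in $\Pi^{-1}(\psi)$ equals the ASEP transition rate from $\Pi(\omega)$ to $\psi$. In particular the image under $\Pi$ of the chain on $\Omega_{L,n}$ is the ASEP on $\Psi_{L,n}$.
   Context: Fix $1\le n\le L$. Particle labels $k$ are taken modulo $n$, positions modulo $L$. $\Omega_{L,n}$ is the set of words $w_1\cdots w_L$ on the ring $\mathbb{Z}/L\mathbb{Z}$ over the alphabet $\{\bullet_1,\dots,\bullet_n,\Box_1,\dots,\Box_n\}$ in which each $\bullet_k$ occurs exactly once, the letters $\bullet_1,\dots,\bullet_n$ appear in this cyclic order, and the remaining $L-n$ letters are arbitrary $\Box_i$'s. The chain on $\Omega_{L,n}$ has transitions (displayed segments are consecutive positions, rest unchanged, $C$ a possibly empty word in the $\Box$-letters): (T1) $\bullet_k\Box_i \to \Box_i\bullet_k$ at rate $p_k$, if $i\neq k$; (T2) $\bullet_{k-1}\,C\,\bullet_k\Box_k \to \bullet_{k-1}\Box_{k-1}\,C\,\bullet_k$ at rate $p_k$; (T3) $\Box_i\bullet_k \to \bullet_k\Box_i$ at rate $q_k$, if $i\neq k$; (T4) $\Box_k\bullet_k\,C\,\bullet_{k+1} \to \bullet_k\,C\,\Box_{k+1}\bullet_{k+1}$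 at rate $q_k$. $\Psi_{L,n}$ is the set of words on the ring $\mathbb{Z}/L\mathbb{Z}$ containing each of $\bullet_1,\dots,\bullet_n$ exactly once in this cyclic order and $L-n$ vacancies $\Box$. The ASEP on $\Psi_{L,n}$ has only the transitions $\bullet_k\Box\to\Box\bullet_k$ at rate $p_k$ and $\Box\bullet_k\to\bullet_k\Box$ at rate $q_k$ (on consecutive positions). The map $\Pi:\Omega_{L,n}\to\Psi_{L,n}$ replaces every letter $\Box_i$ by $\Box$. *)

From mathcomp Require Import all_boot all_order all_algebra.
Set Implicit Arguments. Unset Strict Implicit. Unset Printing Implicit Defensive.
Import Order.TTheory GRing.Theory Num.Theory.

Definition radd (L : nat) (x : 'I_L) (d : nat) : 'I_L :=
  Ordinal (ltn_pmod (x + d) (leq_ltn_trans (leq0n x) (ltn_ord x))).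

Definition rpred (L : nat) (x : 'I_L) : 'I_L := radd x (L - 1).

Definition off (L : nat) (a x : 'I_L) : nat := (x + L - a) %% L.

(* labels k+1 and k-1 modulo n (labels are 0,...,n-1 instead of 1,...,n) *)
Definition lsucc (n : nat) (k : 'I_n) : 'I_n := radd k 1.
Definition lpred (n : nat) (k : 'I_n) : 'I_n := rpred k.

(* Omega alphabet: inl k = bullet_k, inr i = Box_i *)
Definition OLetter (n : nat) := ('I_n + 'I_n)%type.
(* Psi alphabet: inl k = bullet_k, inr tt = Box (vacancy) *)
Definition PLetter (n : nat) := ('I_n + unit)%type.

Definition OWord (n L : nat) := {ffun 'I_L -> OLetter n}.
Definition PWord (n L : nat) := {ffun 'I_L -> PLetter n}.

Definition lbul (n : nat) (B : Type) (c : ('I_n + B)%type) : option 'I_n :=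
  match c with inl k => Some k | inr _ => None end.

(* A word on the ring Z/LZ containing each bullet_k exactly once and in which the
   bullets appear in the cyclic order 1,2,...,n: the first bullet met strictly
   clockwise after bullet_k (after d steps, 0 < d <= L) is bullet_{k+1}. *)
Definition valid_word (n L : nat) (B : finType) (w : {ffun 'I_L -> ('I_n + B)%type}) : bool :=
  [forall k : 'I_n, #|[set x | lbul (w x) == Some k]| == 1] &&
  [forall x : 'I_L, forall k : 'I_n, (lbul (w x) == Some k) ==>
     [exists d : 'I_L,
        (lbul (w (radd x d.+1)) == Some (lsucc k)) &&
        [forall e : 'I_L, (e < d) ==> (lbul (w (radd x e.+1)) == None)]]].

Definition inOmega (n L : nat) (w : OWord n L) : bool := valid_word w.
Definition inPsi (n L : nat) (w : PWord n L) : bool := valid_word w.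

Definition Pi (n L : nat) (w : OWord n L) : PWord n L :=
  [ffun x => match w x with inl k => inl k | inr _ => inr tt end].

Definition swapw (L : nat) (A : finType) (w : {ffun 'I_L -> A}) (x y : 'I_L)
  : {ffun 'I_L -> A} :=
  [ffun z => if z == x then w y else if z == y then w x else w z].

Definition is_box (n : nat) (c : OLetter n) : bool := lbul c == None.

(* (T1) bullet_k Box_i -> Box_i bullet_k, i <> k, bullet_k at position j *)
Definition t1_app (n L : nat) (w : OWord n L) (k : 'I_n) (j : 'I_L) : bool :=
  (w j == inl k) &&
  (match w (radd j 1) with inr i => i != k | inl _ => false end).
Definition t1_res (n L : nat) (w : OWord n L) (j : 'I_L) : OWord n L :=
  swapw w j (radd j 1).

(* (T2) bullet_{k-1} C bullet_k Box_k -> bullet_{k-1} Box_{k-1} C bullet_k,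
   bullet_k at position j, bullet_{k-1} at position a;
   C occupies the m positions a+1,...,a+m, where m = off a j - 1 (n >= 2);
   for n = 1 (a = j) C is the rest of the ring, m = L - 1. *)
Definition t2_len (L : nat) (a j : 'I_L) : nat := (off a j + L - 1) %% L.
Definition t2_app (n L : nat) (w : OWord n L) (k : 'I_n) (j a : 'I_L) : bool :=
  [&& w j == inl k, w (radd j 1) == inr k, w a == inl (lpred k) &
      [forall t : 'I_L, (0 < t <= t2_len a j) ==> is_box (w (radd a t))]].
Definition t2_res (n L : nat) (w : OWord n L) (k : 'I_n) (j a : 'I_L) : OWord n L :=
  [ffun x => if x == radd j 1 then inl k
             else if x == radd a 1 then inr (lpred k)
             else if 0 < off (radd a 1) x <= t2_len a j then w (rpred x)
             else w x].

(* (T3) Box_i bullet_k -> bullet_k Box_i, i <> k, bullet_k at position j *)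
Definition t3_app (n L : nat) (w : OWord n L) (k : 'I_n) (j : 'I_L) : bool :=
  (w j == inl k) &&
  (match w (rpred j) with inr i => i != k | inl _ => false end).
Definition t3_res (n L : nat) (w : OWord n L) (j : 'I_L) : OWord n L :=
  swapw w (rpred j) j.

(* (T4) Box_k bullet_k C bullet_{k+1} -> bullet_k C Box_{k+1} bullet_{k+1},
   bullet_k at position j, bullet_{k+1} at position b;
   C occupies the m positions j+1,...,j+m, m = off j b - 1 (n >= 2);
   for n = 1 (b = j), m = L - 1. *)
Definition t4_app (n L : nat) (w : OWord n L) (k : 'I_n) (j b : 'I_L) : bool :=
  [&& w j == inl k, w (rpred j) == inr k, w b == inl (lsucc k) &
      [forall t : 'I_L, (0 < t <= t2_len j b) ==> is_box (w (radd j t))]].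
Definition t4_res (n L : nat) (w : OWord n L) (k : 'I_n) (j b : 'I_L) : OWord n L :=
  [ffun x => if x == rpred j then inl k
             else if x == rpred b then inr (lsucc k)
             else if off j x < t2_len j b then w (radd x 1)
             else w x].

Definition rateOmega (R : numDomainType) (n L : nat) (p q : 'I_n -> R)
  (w w' : OWord n L) : R :=
  \sum_(k : 'I_n) \sum_(j : 'I_L)
    ((if t1_app w k j && (t1_res w j == w') then p k else 0)
   + (\sum_(a : 'I_L) if t2_app w k j a && (t2_res w k j a == w') then p k else 0)
   + (if t3_app w k j && (t3_res w j == w') then q k else 0)
   + (\sum_(b : 'I_L) if t4_app w k j b && (t4_res w k j b == w') then q k else 0)).

Definition rateASEP (R : numDomainType) (n L : nat) (p q : 'I_n -> R)
  (v v' : PWord n L) : R :=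
  \sum_(k : 'I_n) \sum_(j : 'I_L)
    ((if [&& v j == inl k, v (radd j 1) == inr tt & swapw v j (radd j 1) == v']
      then p k else 0)
   + (if [&& v j == inl k, v (rpred j) == inr tt & swapw v (rpred j) j == v']
      then q k else 0)).

(* Lumpability holds jump by jump.  Fix the particle bullet_k at position j.  Its moves
   to the right are T1 (right neighbour Box_i with i <> k) and T2 (right neighbour
   Box_k), and at most one of them applies; T2 applies for the single position of
   bullet_(k-1), which fixes the block C.  Both rules move bullet_k one step to the
   right, relabelling boxes only (T2 shifts C one step to the right), so once the box
   labels are erased the result is the ASEP word with bullet_k and the vacancy to its
   right exchanged.  The left moves T3/T4 are symmetric.  Validity only depends on the
   bullet positions, so every result lies in Omega exactly when its image lies in Psi. *)
From mathcomp Require Import all_boot all_order all_algebra zify.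
Import Order.TTheory GRing.Theory Num.Theory.
Set Implicit Arguments. Unset Strict Implicit. Unset Printing Implicit Defensive.

Section CyclicArithmetic.
Variable L : nat.
Implicit Types a x : 'I_L.

Lemma radd_modn a m : radd a (m %% L) = radd a m.
Proof. by apply: val_inj; rewrite /= modnDmr. Qed.

Lemma radd0 a : radd a 0 = a.
Proof. by apply: val_inj; rewrite /= addn0 modn_small. Qed.

Lemma raddA a m m' : radd (radd a m) m' = radd a (m + m').
Proof. by apply: val_inj; rewrite /= modnDml addnA. Qed.

Lemma rpred_raddS a t : rpred (radd a t.+1) = radd a t.
Proof.
have L_gt0 : 0 < L by case: a => /= a; lia.
by rewrite /rpred raddA -radd_modn (_ : t.+1 + (L - 1) = t + L) ?modnDr ?radd_modn //; lia.
Qed.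

Lemma off_lt a x : off a x < L.
Proof. by rewrite ltn_pmod //; case: x => /= x; lia. Qed.

Lemma radd_off a x : radd a (off a x) = x.
Proof.
apply: val_inj; rewrite /= /off modnDmr.
by rewrite (_ : a + (x + L - a) = x + L) ?modnDr ?modn_small //; case: a x => a ? [x ?] /=; lia.
Qed.

Lemma off_radd a t : t < L -> off a (radd a t) = t.
Proof.
move=> ltL; rewrite /off /=; have lt_a := ltn_ord a.
case: (ltnP (a + t) L) => [lt_at | le_at].
  by rewrite (modn_small lt_at) (_ : a + t + L - a = t + L) ?modnDr ?modn_small //; lia.
rewrite -{1}(subnK le_at) modnDr (@modn_small (a + t - L)); last by lia.
by rewrite (_ : a + t - L + L - a = t) ?modn_small //; lia.
Qed.

Lemma radd_inj a u v : u < L -> v < L -> (radd a u == radd a v) = (u == v).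
Proof.
move=> ltu ltv; apply/eqP/eqP => [E | -> //].
by rewrite -(off_radd a ltu) E off_radd.
Qed.

Lemma radd_eq_modn a u m : u < L -> (radd a u == radd a m) = (u == m %% L).
Proof.
move=> ltu; rewrite -(radd_modn a m) radd_inj // ltn_pmod //; lia.
Qed.

Lemma t2_len_radd a d : d < L -> t2_len a (radd a d.+1) = d.
Proof.
move=> ltd; rewrite /t2_len -radd_modn off_radd ?ltn_pmod //; last by lia.
case: (ltnP d.+1 L) => [ltd1 | le_d1].
  by rewrite (modn_small ltd1) (_ : d.+1 + L - 1 = d + L) ?modnDr ?modn_small //; lia.
by rewrite (_ : d.+1 = L) ?modnn ?add0n ?modn_small //; lia.
Qed.

End CyclicArithmetic.

Section ValidWords.
Variables (n L : nat) (B : finType).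
Implicit Types (w : {ffun 'I_L -> ('I_n + B)%type}) (k : 'I_n) (x y : 'I_L).

Lemma valid_bullet_exists w k : valid_word w -> exists x, lbul (w x) = Some k.
Proof.
case/andP=> /forallP/(_ k)/cards1P [x Ex] _; exists x.
have : x \in [set u | lbul (w u) == Some k] by rewrite Ex set11.
by rewrite inE => /eqP.
Qed.

Lemma valid_bullet_inj w k x y :
  valid_word w -> lbul (w x) = Some k -> lbul (w y) = Some k -> x = y.
Proof.
case/andP=> /forallP/(_ k)/cards1P [z Ez] _ wx wy.
have mem u : lbul (w u) = Some k -> u = z.
  by move=> wu; apply/set1P; rewrite -Ez inE wu.
by rewrite (mem x wx) (mem y wy).
Qed.

Lemma valid_next_bullet w k x : valid_word w -> lbul (w x) = Some k ->
  exists2 d : 'I_L, lbul (w (radd x d.+1)) = Some (lsucc k)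
                  & forall t, 0 < t <= d -> lbul (w (radd x t)) = None.
Proof.
case/andP=> _ /forallP/(_ x)/forallP/(_ k) + wx; rewrite wx eqxx /=.
case/existsP=> d /andP [/eqP wd /forallP gap]; exists d => // t /andP [t_gt0 le_td].
have lt_tL : t.-1 < L by have := ltn_ord d; lia.
by apply/eqP; rewrite -(prednK t_gt0); apply: (implyP (gap (Ordinal lt_tL))) => /=; lia.
Qed.

Lemma lsucc_lpred k : lsucc (lpred k) = k.
Proof.
have n_gt0 : 0 < n := leq_ltn_trans (leq0n k) (ltn_ord k).
by rewrite /lsucc /lpred /rpred raddA subnK // -radd_modn modnn radd0.
Qed.

Lemma valid_prev_bullet w k j : valid_word w -> lbul (w j) = Some k ->
  exists a (d : 'I_L), [/\ lbul (w a) = Some (lpred k), j = radd a d.+1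
                         & forall t, 0 < t <= d -> lbul (w (radd a t)) = None].
Proof.
move=> valid_w wj; have [a wa] := valid_bullet_exists (lpred k) valid_w.
have [d wd gap] := valid_next_bullet valid_w wa; rewrite lsucc_lpred in wd.
by exists a, d; split; rewrite // (valid_bullet_inj valid_w wj wd).
Qed.

End ValidWords.

Lemma valid_word_lbul n L (B1 B2 : finType)
    (w1 : {ffun 'I_L -> ('I_n + B1)%type}) (w2 : {ffun 'I_L -> ('I_n + B2)%type}) :
  (forall x, lbul (w1 x) = lbul (w2 x)) -> valid_word w1 = valid_word w2.
Proof.
move=> E; congr (_ && _).
  by apply: eq_forallb => k; congr (_ == _); apply: eq_card => x; rewrite !inE E.
apply: eq_forallb => x; apply: eq_forallb => k; rewrite E; congr (_ ==> _).
apply: eq_existsb => d; rewrite E; congr (_ && _).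
by apply: eq_forallb => e; rewrite E.
Qed.

Section Projection.
Variables n L : nat.
Implicit Types (w r : OWord n L) (v psi : PWord n L) (x : 'I_L).

Definition Pi_fiber psi : pred (OWord n L) := fun r => inOmega r && (Pi r == psi).

Lemma lbul_Pi w x : lbul (Pi w x) = lbul (w x).
Proof. by rewrite ffunE; case: (w x). Qed.

Lemma Pi_inl w x k : (Pi w x == inl k) = (w x == inl k).
Proof. by rewrite ffunE; case: (w x). Qed.

Lemma Pi_box w x : (Pi w x == inr tt) = is_box (w x).
Proof. by rewrite ffunE; case: (w x) => // [[]]. Qed.

Lemma eq_Pi w1 w2 : (forall x, lbul (w1 x) = lbul (w2 x)) -> Pi w1 = Pi w2.
Proof.
move=> E; apply/ffunP => x; rewrite !ffunE; have := E x.
by case: (w1 x) => ?; case: (w2 x) => ? //= [->].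
Qed.

Lemma Pi_swapw w x y : Pi (swapw w x y) = swapw (Pi w) x y.
Proof. by apply/ffunP => z; rewrite !ffunE; case: (z == x); case: (z == y); rewrite ?ffunE. Qed.

Lemma Pi_fiberE psi r v : inPsi psi -> Pi r = v -> Pi_fiber psi r = (v == psi).
Proof.
move=> valid_psi <-; rewrite /Pi_fiber; case: eqP => [Er | _]; last by rewrite andbF.
rewrite andbT /inOmega (@valid_word_lbul _ _ _ _ r psi) // => x.
by rewrite -Er lbul_Pi.
Qed.

End Projection.

Lemma sumr_if_eq (R : numDomainType) (T : finType) (P : pred T) (b : bool) (r : T) (c : R) :
  (\sum_(x | P x) (if b && (r == x) then c else 0) = if b && P r then c else 0)%R.
Proof.
rewrite big_mkcond (bigD1 r) //= eqxx andbT big1 ?addr0; first by case: b; case: (P r).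
by move=> x /negbTE r_x; rewrite eq_sym r_x andbF; case: (P x).
Qed.

Section MovedBullet.
Variables (n L : nat) (w : OWord n L) (k : 'I_n).

Lemma lbul_t2_res a d :
  d < L -> w (radd a d.+1) = inl k -> lbul (w (radd (radd a d.+1) 1)) = None ->
  (forall t, 0 < t <= d -> lbul (w (radd a t)) = None) ->
  forall x, lbul (t2_res w k (radd a d.+1) a x)
          = lbul (swapw w (radd a d.+1) (radd (radd a d.+1) 1) x).
Proof.
move=> ltd wj wj1 gap x; rewrite /t2_res /swapw !ffunE t2_len_radd //.
set a1 := radd a 1.
have Ej : radd a d.+1 = radd a1 d by rewrite raddA add1n.
have gap1 s : s < d -> lbul (w (radd a1 s)) = None.
  by move=> lt_sd; rewrite raddA add1n gap.
rewrite Ej raddA addn1 in wj wj1 *.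
have j_neq_j1 : (d.+1 %% L == d) = false.
  by rewrite eq_sym -(radd_eq_modn a1) //; apply/eqP => E; move: wj1; rewrite -E wj.
rewrite -(radd_off a1 x); have := off_lt a1 x; move: (off a1 x) => t ltt.
rewrite off_radd // !(radd_eq_modn a1 _ ltt) (modn_small ltd).
have -> : (radd a1 t == a1) = (t == 0) by rewrite -{2}(radd0 a1) radd_inj //; lia.
have [-> | t_neq_j1] := eqVneq t (d.+1 %% L); first by rewrite j_neq_j1 wj.
have [-> | t_gt0] := posnP t.
  by case: (posnP d) wj1 => [-> | d_gt0] wj1; rewrite ?wj1 // ltn_eqF // gap1.
case: (leqP t d) => [le_td | lt_dt] /=; last by rewrite (gtn_eqF lt_dt).
have -> : rpred (radd a1 t) = radd a1 t.-1 by rewrite -(rpred_raddS a1 t.-1) prednK.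
rewrite gap1; last by lia.
by case: eqVneq => [_ | t_neq_d]; rewrite ?wj1 // gap1 // ltn_neqAle t_neq_d.
Qed.

Lemma lbul_t4_res j d :
  d < L -> w j = inl k -> lbul (w (rpred j)) = None ->
  (forall t, 0 < t <= d -> lbul (w (radd j t)) = None) ->
  forall x, lbul (t4_res w k j (radd j d.+1) x) = lbul (swapw w (rpred j) j x).
Proof.
move=> ltd wj wj0 gap x; rewrite /t4_res /swapw !ffunE t2_len_radd // rpred_raddS.
have L_gt1 : 1 < L.
  by case: (ltnP 1 L) wj0 => // le_L1; rewrite /rpred (_ : L - 1 = 0) ?radd0 ?wj //; lia.
rewrite -(radd_off j x); have := off_lt j x; move: (off j x) => t ltt.
rewrite off_radd // raddA addn1 (radd_inj j ltt ltd).
have -> : (radd j t == rpred j) = (t == L - 1) by rewrite radd_inj //; lia.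
have -> : (radd j t == j) = (t == 0) by rewrite -{2}(radd0 j) radd_inj //; lia.
have [_ | t_neq_prev] := eqVneq t (L - 1); first by rewrite wj.
have [-> | t_neq_d] := eqVneq t d.
  by case: (posnP d) gap => [-> | d_gt0] gap; rewrite ?eqxx ?wj0 // gap // d_gt0 leqnn.
case: (ltnP t d) => [lt_td | le_dt]; last by case: (posnP t) => // t0; lia.
by rewrite gap //; case: (posnP t) => [_ | t_gt0]; rewrite ?wj0 // gap // t_gt0 ltnW.
Qed.

End MovedBullet.

Section JumpRates.
Variables (R : numDomainType) (n L : nat) (w : OWord n L) (psi : PWord n L).
Hypotheses (valid_w : inOmega w) (valid_psi : inPsi psi).
Local Open Scope ring_scope.

Lemma sum_t2_fiber k j (c : R) : w j = inl k -> w (radd j 1) = inr k ->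
  \sum_(a : 'I_L) (if t2_app w k j a && Pi_fiber psi (t2_res w k j a) then c else 0)
  = if swapw (Pi w) j (radd j 1) == psi then c else 0.
Proof.
move=> wj wj1; have /(valid_prev_bullet valid_w) [a [d [wa Ej gap]]] : lbul (w j) = Some k.
  by rewrite wj.
subst j; have ltd := ltn_ord d.
rewrite (bigD1 a) //= big1 ?addr0; last first.
  move=> b b_neq_a; case: ifP => // /andP [/and4P [_ _ /eqP wb _] _].
  by case/eqP: b_neq_a; apply: (valid_bullet_inj valid_w _ wa); rewrite wb.
have -> : t2_app w k (radd a d.+1) a.
  rewrite /t2_app wj wj1 !eqxx /=; apply/andP; split; first by case: (w a) wa => // ? [->].
  by apply/forallP => t; apply/implyP; rewrite t2_len_radd // => /gap; rewrite /is_box => ->.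
rewrite /= (Pi_fiberE valid_psi (_ : _ = swapw (Pi w) (radd a d.+1) (radd (radd a d.+1) 1))) //.
by rewrite -Pi_swapw; apply/eq_Pi/lbul_t2_res; rewrite ?wj1.
Qed.

Lemma sum_t4_fiber k j (c : R) : w j = inl k -> w (rpred j) = inr k ->
  \sum_(b : 'I_L) (if t4_app w k j b && Pi_fiber psi (t4_res w k j b) then c else 0)
  = if swapw (Pi w) (rpred j) j == psi then c else 0.
Proof.
move=> wj wj0; have /(valid_next_bullet valid_w) [d wb gap] : lbul (w j) = Some k.
  by rewrite wj.
have ltd := ltn_ord d.
rewrite (bigD1 (radd j d.+1)) //= big1 ?addr0; last first.
  move=> b b_neq; case: ifP => // /andP [/and4P [_ _ /eqP wb' _] _].
  by case/eqP: b_neq; apply: (valid_bullet_inj valid_w _ wb); rewrite wb'.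
have -> : t4_app w k j (radd j d.+1).
  rewrite /t4_app wj wj0 !eqxx /=; apply/andP; split; first by case: (w _) wb => // ? [->].
  by apply/forallP => t; apply/implyP; rewrite t2_len_radd // => /gap; rewrite /is_box => ->.
rewrite /= (Pi_fiberE valid_psi (_ : _ = swapw (Pi w) (rpred j) j)) //.
by rewrite -Pi_swapw; apply/eq_Pi/lbul_t4_res; rewrite ?wj0.
Qed.

Lemma fiber_rate_right (p : 'I_n -> R) k j :
  (if t1_app w k j && Pi_fiber psi (t1_res w j) then p k else 0)
  + \sum_(a : 'I_L) (if t2_app w k j a && Pi_fiber psi (t2_res w k j a) then p k else 0)
  = if [&& Pi w j == inl k, Pi w (radd j 1) == inr tt
         & swapw (Pi w) j (radd j 1) == psi] then p k else 0.
Proof.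
rewrite Pi_inl Pi_box /t1_app; have [wj | wj] := eqVneq (w j) (inl k); last first.
  by rewrite add0r big1 // => a _; rewrite /t2_app (negbTE wj).
case wj1 : (w (radd j 1)) => [k' | i] /=.
  by rewrite add0r big1 // => a _; rewrite /t2_app wj1 andbF.
have [Eik | i_neq_k] := eqVneq i k.
  by subst i; rewrite add0r sum_t2_fiber.
have inr_neq : (inr i == inr k :> OLetter n) = false by exact: negbTE i_neq_k.
rewrite big1 => [|a _]; last by rewrite /t2_app wj1 inr_neq andbF.
by rewrite addr0 (Pi_fiberE valid_psi (Pi_swapw w j _)).
Qed.

Lemma fiber_rate_left (q : 'I_n -> R) k j :
  (if t3_app w k j && Pi_fiber psi (t3_res w j) then q k else 0)
  + \sum_(b : 'I_L) (if t4_app w k j b && Pi_fiber psi (t4_res w k j b) then q k else 0)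
  = if [&& Pi w j == inl k, Pi w (rpred j) == inr tt
         & swapw (Pi w) (rpred j) j == psi] then q k else 0.
Proof.
rewrite Pi_inl Pi_box /t3_app; have [wj | wj] := eqVneq (w j) (inl k); last first.
  by rewrite add0r big1 // => b _; rewrite /t4_app (negbTE wj).
case wj0 : (w (rpred j)) => [k' | i] /=.
  by rewrite add0r big1 // => b _; rewrite /t4_app wj0 andbF.
have [Eik | i_neq_k] := eqVneq i k.
  by subst i; rewrite add0r sum_t4_fiber.
have inr_neq : (inr i == inr k :> OLetter n) = false by exact: negbTE i_neq_k.
rewrite big1 => [|b _]; last by rewrite /t4_app wj0 inr_neq andbF.
by rewrite addr0 (Pi_fiberE valid_psi (Pi_swapw w _ j)).
Qed.

End JumpRates.

Local Open Scope ring_scope.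

Theorem proposition3p2 (R : realDomainType) (n L : nat)
  (hn : (1 <= n)%N) (hnL : (n <= L)%N)
  (p q : 'I_n -> R) (hp : forall k, 0 <= p k) (hq : forall k, 0 <= q k)
  (w : OWord n L) (hw : inOmega w)
  (psi : PWord n L) (hpsi : inPsi psi) (hne : psi != Pi w) :
  \sum_(w' : OWord n L | inOmega w' && (Pi w' == psi)) rateOmega p q w w'
  = rateASEP p q (Pi w) psi.
Proof.
rewrite /rateOmega /rateASEP exchange_big; apply: eq_bigr => k _.
rewrite exchange_big; apply: eq_bigr => j _.
rewrite -(fiber_rate_right hw hpsi p k j) -(fiber_rate_left hw hpsi q k j).
rewrite !big_split /= !(exchange_big _ _ _ (Pi_fiber psi)) !sumr_if_eq.
under eq_bigr do rewrite sumr_if_eq.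
under [X in _ + _ + _ + X]eq_bigr do rewrite sumr_if_eq.
by rewrite !addrA.
Qed.
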